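(* Consider the following disjunctive hierarchical secret sharing scheme. Setting. Let $n,m$ be positive integers and let the participant set $\mathcal{P}=\{1,\dots,n\}$ be partitioned into $m$ disjoint nonempty blocks $\mathcal{P}_1,\dots,\mathcal{P}_m$ of consecutive indices: with $n_\ell=|\mathcal{P}_\ell|$, $N_0=0$, $N_\ell=\sum_{w=1}^{\ell}n_w$, we have $\mathcal{P}_\ell=\{N_{\ell-1}+1,\dots,N_\ell\}$, so that $\mathcal{P}_1\cup\dots\cup\mathcal{P}_\ell=[N_\ell]:=\{1,\dots,N_\ell\}$. Let $t_1,\dots,t_m$ be integers with $1\le t_1<t_2<\dots<t_m$ and $t_\ell\le N_\ell$ for all $\ell\in[m]$. Public parameters. A prime $m_0$ and integers $m_1,\dots,m_n$ such that $\gcd(m_i,m_j)=1$ for all $0\le i<j\le n$, $m_0<m_1<\dots<m_n$, and, for some real numbers $k\ge 1$ and $\theta\in(0,1)$, $km_0<m_i<km_0+m_0^{\theta}$ for all $i\in[n]$. Participant $i$ is assigned modulus $m_i$. Also $m$ publicly known distinct functions $h_1,\dots,h_m$, where for each $i\in[n]$ and $\ell\in[m]$, $h_\ell(x,\ell)\in\mathbb{Z}_{m_i}$ for $x\in\mathbb{Z}_{m_i}$. Share generation. For a secret $s\in\mathbb{Z}_{m_0}=\{0,\dots,m_0-1\}$, the dealer chooses integers $c_i\in\mathbb{Z}_{m_i}$ for $i\in[N_{m-1}]$ and integers $\alpha_\ell$ ($\ell\in[m]$) such that $0\le y_\ell:=s+\alpha_\ell m_0<\prod_{i=1}^{t_\ell}m_i$.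 Participant $i$ receives the share $s_i=c_i$ if $i\in[N_{m-1}]$ and $s_i=y_m \bmod m_i$ if $i\in\{N_{m-1}+1,\dots,N_m\}$. For every $i\in[N_{m-1}]$, letting $\ell_1$ be the index with $i\in\mathcal{P}_{\ell_1}$, the dealer publishes $w_i^{(\ell)}=(y_\ell-h_\ell(s_i,\ell))\bmod m_i$ for every $\ell\in\{\ell_1,\dots,m\}$. Reconstruction. Given $\mathcal{A}\subseteq\mathcal{P}$ and $\ell\in[m]$ with $\mathcal{A}^{(\ell)}:=\mathcal{A}\cap[N_\ell]$ satisfying $|\mathcal{A}^{(\ell)}|\ge t_\ell$, the participants compute, for $i\in\mathcal{A}^{(\ell)}$, $s_i^{(\ell)}=h_\ell(s_i,\ell)+w_i^{(\ell)}$ if $\ell\le m-1$, or if $\ell=m$ and $i\le N_{m-1}$; and $s_i^{(m)}=s_i$ if $\ell=m$ and $i\in\{N_{m-1}+1,\dots,N_m\}$. They then compute $Y=\left(\sum_{i\in\mathcal{A}^{(\ell)}}\lambda_{i}M_{i}s_i^{(\ell)}\right)\bmod M$, the least nonnegative residue, where $M=\prod_{i\in\mathcal{A}^{(\ell)}}m_i$, $M_i=M/m_i$, $\lambda_i\equiv M_i^{-1}\pmod{m_i}$, and output $Y\bmod m_0$. Claim. For every secret $s\in\mathbb{Z}_{m_0}$, every admissible choice of the $c_i$ and $\alpha_\ell$, and every subset $\mathcal{A}$ in the access structure $\Gamma=\{\mathcal{A}\subseteq\mathcal{P}:\exists\,\ell\in[m]\text{ with }|\mathcal{A}\cap(\bigcup_{w=1}^{\ell}\mathcal{P}_w)|\ge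 t_\ell\}$, taking any $\ell$ with $|\mathcal{A}\cap[N_\ell]|\ge t_\ell$, the reconstruction procedure yields $Y=y_\ell$ and outputs $Y\bmod m_0=s$.
   Context: $\mathbb{Z}_{q}$ denotes $\{0,1,\dots,q-1\}$ and $x\bmod q$ denotes the least nonnegative residue. $[n]=\{1,\dots,n\}$. The functions $h_\ell$ are intended to be one-way functions, but no property of them is needed beyond being fixed public maps. *)

From Stdlib Require Import Reals.
From mathcomp Require Import all_boot all_order all_algebra.
Set Implicit Arguments. Unset Strict Implicit. Unset Printing Implicit Defensive.
Import Order.TTheory GRing.Theory Num.Theory.

Definition Nsum (nb : nat -> nat) (l : nat) : nat := (\sum_(1 <= w < l.+1) nb w)%N.

Local Open Scope ring_scope.

Definition yval (m0 : nat) (s : int) (alpha : nat -> int) (l : nat) : int :=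
  s + alpha l * m0%:Z.

Definition share (nb : nat -> nat) (m : nat) (mm : nat -> nat)
  (c : nat -> int) (y : nat -> int) (i : nat) : int :=
  if (i <= Nsum nb m.-1)%N then c i else (y m %% (mm i)%:Z)%Z.

(* published value w_i^(l) = (y_l - h_l(s_i, l)) mod m_i ;
   h l x stands for h_l(x, l) *)
Definition pubw (h : nat -> int -> int) (mm : nat -> nat) (y : nat -> int)
  (sh : nat -> int) (i l : nat) : int :=
  ((y l - h l (sh i)) %% (mm i)%:Z)%Z.

Definition Aset (A : pred nat) (nb : nat -> nat) (l : nat) : seq nat :=
  [seq i <- iota 1 (Nsum nb l) | A i].

Definition recon_share (nb : nat -> nat) (m : nat) (h : nat -> int -> int)
  (mm : nat -> nat) (y : nat -> int) (sh : nat -> int) (l i : nat) : int :=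
  if (l <= m.-1)%N || (i <= Nsum nb m.-1)%N
  then h l (sh i) + pubw h mm y sh i l
  else sh i.

Definition Mprod (A : pred nat) (nb : nat -> nat) (mm : nat -> nat) (l : nat) : nat :=
  (\prod_(i <- Aset A nb l) mm i)%N.

Definition Yrec (A : pred nat) (nb : nat -> nat) (m : nat) (h : nat -> int -> int)
  (mm : nat -> nat) (y : nat -> int) (sh : nat -> int) (lam : nat -> int) (l : nat) : int :=
  ((\sum_(i <- Aset A nb l)
      lam i * ((Mprod A nb mm l %/ mm i)%N)%:Z * recon_share nb m h mm y sh l i)
    %% (Mprod A nb mm l)%:Z)%Z.

From Stdlib Require Import Reals.
From mathcomp Require Import all_boot all_order all_algebra.
From mathcomp Require Import ring.
Import Order.TTheory GRing.Theory Num.Theory.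
Local Open Scope ring_scope.

(* Each reconstructed share s_i^(l) is congruent to y_l modulo m_i: the public
   offset w_i^(l) is y_l - h_l(s_i) reduced mod m_i, and the last block holds
   y_m mod m_i itself.  Hence the Chinese-remainder sum Y is congruent to y_l
   modulo the product M of the pairwise coprime moduli of A^(l).  As the moduli
   increase and |A^(l)| >= t_l, we get 0 <= y_l < m_1 ... m_(t_l) <= M, so the
   least residue Y is y_l itself, and y_l = s + alpha_l m_0 reduces to s. *)

Lemma dvdz_prod_pairwise_coprime (I : eqType) (F : I -> nat) (r : seq I) (z : int) :
  pairwise (fun i j => coprime (F i) (F j)) r ->
  (forall i, i \in r -> ((F i)%:Z %| z)%Z) ->
  ((\prod_(i <- r) F i)%N%:Z %| z)%Z.
Proof.
elim: r => [|a r IH] /=; first by rewrite big_nil dvd1z.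
move=> /andP[cop_a cop_r] dvd_z.
have cop_prod : coprime (F a) (\prod_(j <- r) F j).
  rewrite big_seq; apply: (big_ind (coprime (F a))) => [|x y|j rj]; first exact: coprimen1.
    by rewrite coprimeMr => -> ->.
  exact: (allP cop_a).
rewrite big_cons PoszM Gauss_dvdz ?dvd_z ?mem_head //=.
by apply: IH => // i ri; rewrite dvd_z // inE ri orbT.
Qed.

Section ChineseRemainder.

Variables (I : eqType) (F : I -> nat) (r : seq I).
Hypothesis r_uniq : uniq r.

Local Notation M := (\prod_(k <- r) F k)%N.

Lemma dvdn_prod_divn i j : i \in r -> j \in r -> i != j -> (F i %| M %/ F j)%N.
Proof.
move=> ri rj ij; have [->|Fj_gt0] := posnP (F j); first by rewrite divn0 dvdn0.
have rem_i : i \in rem j r by rewrite (mem_rem_uniq j r_uniq) inE ij.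
by rewrite (big_rem j rj) /= mulKn // (big_rem i rem_i) dvdn_mulr.
Qed.

Variables (lam res : I -> int) (y : int).
Hypothesis lam_inv : forall j, j \in r -> (lam j * (M %/ F j)%N%:Z = 1 %[mod (F j)%:Z])%Z.
Hypothesis res_eqmod : forall j, j \in r -> (res j = y %[mod (F j)%:Z])%Z.

Lemma crt_sum_eqmod i : i \in r ->
  (\sum_(j <- r) lam j * (M %/ F j)%N%:Z * res j = y %[mod (F i)%:Z])%Z.
Proof.
move=> ri; apply/eqP; rewrite eqz_mod_dvd (big_rem i ri) /= addrAC.
apply: rpredD.
  have -> : lam i * (M %/ F i)%N%:Z * res i - y
          = (lam i * (M %/ F i)%N%:Z - 1) * res i + (res i - y) by ring.
  apply: rpredD; first apply: dvdz_mulr.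
    by rewrite -eqz_mod_dvd; apply/eqP; exact: lam_inv.
  by rewrite -eqz_mod_dvd; apply/eqP; exact: res_eqmod.
rewrite big_seq; apply: rpred_sum => j; rewrite (mem_rem_uniq i r_uniq) inE.
case/andP=> ji rj; apply/dvdz_mulr/dvdz_mull.
by rewrite dvdzE dvdn_prod_divn // eq_sym.
Qed.

Lemma crt_reconstruct :
  pairwise (fun i j => coprime (F i) (F j)) r -> 0 <= y < M%:Z ->
  ((\sum_(j <- r) lam j * (M %/ F j)%N%:Z * res j) %% M%:Z)%Z = y.
Proof.
move=> r_coprime y_bnd.
have : (M%:Z %| \sum_(j <- r) lam j * (M %/ F j)%N%:Z * res j - y)%Z.
  apply: dvdz_prod_pairwise_coprime => // i ri.
  by rewrite -eqz_mod_dvd; apply/eqP; exact: crt_sum_eqmod.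
by rewrite -eqz_mod_dvd => /eqP ->; exact: modz_small.
Qed.

End ChineseRemainder.

Lemma leq_prod_iota_sorted (F : nat -> nat) (n a t : nat) (r : seq nat) :
  {in [pred i | i <= n]%N &, {homo F : i j / (i <= j)%N}} ->
  (forall i, (i <= n)%N -> (0 < F i)%N) ->
  sorted ltn r -> (forall i, i \in r -> (a <= i <= n)%N) -> (t <= size r)%N ->
  (\prod_(a <= i < a + t) F i <= \prod_(i <- r) F i)%N.
Proof.
move=> F_mono F_pos; elim: r a t => [|x r IH] a t r_sorted r_bnd.
  by rewrite leqn0 => /eqP ->; rewrite addn0 big_geq // big_nil.
case: t => [_|t].
  rewrite addn0 big_geq // big_seq; apply: prodn_cond_gt0 => i /r_bnd /andP[_].
  exact: F_pos.
rewrite /= ltnS => t_le.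
have /andP[ax xn] := r_bnd x (mem_head x r).
rewrite addnS big_ltn ?ltnS ?leq_addr // big_cons.
apply: leq_mul; first by apply: F_mono => //=; exact: leq_trans ax xn.
have x_lt_r : all (ltn x) r := order_path_min ltn_trans r_sorted.
rewrite -addSn; apply: IH => //; first exact: path_sorted r_sorted.
move=> i ri; have /andP[_ ->] := r_bnd i (mem_behead (s := x :: r) ri).
by rewrite andbT (leq_ltn_trans ax (allP x_lt_r i ri)).
Qed.

Lemma sorted_pairwise_coprime (F : nat -> nat) (n : nat) (r : seq nat) :
  (forall i j, (i < j <= n)%N -> coprime (F i) (F j)) ->
  sorted ltn r -> (forall i, i \in r -> (i <= n)%N) ->
  pairwise (fun i j => coprime (F i) (F j)) r.
Proof.
move=> F_coprime r_sorted r_bnd.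
apply: (sub_in_pairwise (P := [pred i | i <= n]%N) (r := ltn)).
- by move=> i j _ jn ij; apply: F_coprime; apply/andP; split.
- exact/allP.
- by rewrite -sorted_pairwise //; exact: ltn_trans.
Qed.

Lemma recon_share_eqmod nb m h mm y c l i : (l <= m)%N ->
  (recon_share nb m h mm y (share nb m mm c y) l i = y l %[mod (mm i)%:Z])%Z.
Proof.
move=> l_le; rewrite /recon_share /pubw; case: ifPn => [_|].
  by rewrite modzDmr addrC subrK.
rewrite negb_or -!ltnNge => /andP[lt_l i_gt].
have -> : l = m by apply/eqP; rewrite eqn_leq l_le; case: (m) lt_l.
by rewrite /share leqNgt i_gt modz_mod.
Qed.

Lemma yval_modz m0 s alpha l : 0 <= s < m0%:Z -> (yval m0 s alpha l %% m0%:Z)%Z = s.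
Proof. by move=> s_bnd; rewrite /yval addrC modzMDl modz_small. Qed.

Theorem mainTheorem1
  (n m : nat) (nb : nat -> nat) (t : nat -> nat)
  (mm : nat -> nat) (k theta : R) (h : nat -> int -> int)
  (s : int) (c : nat -> int) (alpha : nat -> int)
  (A : pred nat) (l : nat) (lam : nat -> int) :
  (* setting *)
  (0 < n)%N -> (0 < m)%N ->
  (forall w, (1 <= w <= m)%N -> (0 < nb w)%N) ->
  Nsum nb m = n ->
  (1 <= t 1)%N ->
  (forall w, (1 <= w < m)%N -> (t w < t w.+1)%N) ->
  (forall w, (1 <= w <= m)%N -> (t w <= Nsum nb w)%N) ->
  (* public parameters *)
  prime (mm 0%N) ->
  (forall i j, (i < j <= n)%N -> coprime (mm i) (mm j)) ->
  (forall i, (i < n)%N -> (mm i < mm i.+1)%N) ->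
  Rle 1 k -> Rlt 0 theta -> Rlt theta 1 ->
  (forall i, (1 <= i <= n)%N ->
     Rlt (Rmult k (INR (mm 0%N))) (INR (mm i)) /\
     Rlt (INR (mm i)) (Rplus (Rmult k (INR (mm 0%N))) (Rpower (INR (mm 0%N)) theta))) ->
  (forall l1 l2, (1 <= l1 <= m)%N -> (1 <= l2 <= m)%N -> l1 <> l2 -> h l1 <> h l2) ->
  (forall i l', (1 <= i <= n)%N -> (1 <= l' <= m)%N -> forall x : int,
     0 <= x < (mm i)%:Z -> 0 <= h l' x < (mm i)%:Z) ->
  (* share generation *)
  0 <= s < (mm 0%N)%:Z ->
  (forall i, (1 <= i <= Nsum nb m.-1)%N -> 0 <= c i < (mm i)%:Z) ->
  (forall l', (1 <= l' <= m)%N ->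
     0 <= yval (mm 0%N) s alpha l' /\
     yval (mm 0%N) s alpha l' < (\prod_(1 <= i < (t l').+1) mm i)%:Z) ->
  (* reconstruction by A using level l *)
  (forall i, A i -> (1 <= i <= n)%N) ->
  (1 <= l <= m)%N ->
  (t l <= size (Aset A nb l))%N ->
  (forall i, i \in Aset A nb l ->
     (lam i * ((Mprod A nb mm l %/ mm i)%N)%:Z = 1 %[mod (mm i)%:Z])%Z) ->
  let y := yval (mm 0%N) s alpha in
  let Y := Yrec A nb m h mm y (share nb m mm c y) lam l in
  Y = y l /\ (Y %% (mm 0%N)%:Z)%Z = s.
Proof.
(* The bounds involving k and theta and the properties of the h_l only matter
   for secrecy, not for correctness. *)
move=> _ _ _ _ _ _ _ m0_prime mm_coprime mm_lt _ _ _ _ _ _ s_bnd _ y_bnd A_bnd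
  l_bnd t_le lam_inv y Y.
have mm_mono : {in [pred i | i <= n]%N &, {homo mm : i j / (i <= j)%N}}.
  apply: homo_leq_in leqnn leq_trans _ _.
  - by move=> i j _ jn p /andP[_ /ltnW pj]; exact: leq_trans pj jn.
  - by move=> i _ i_lt; apply/ltnW/mm_lt.
have mm_pos i : (i <= n)%N -> (0 < mm i)%N.
  by move=> i_le; rewrite (leq_trans (prime_gt0 m0_prime)) ?mm_mono.
set L := Aset A nb l.
have L_bnd i : i \in L -> (1 <= i <= n)%N by rewrite mem_filter => /andP[/A_bnd].
have L_sorted : sorted ltn L := sorted_filter ltn_trans _ (iota_ltn_sorted 1 _).
have [y_ge0 y_lt] := y_bnd l l_bnd.
have YE : Y = y l.
  apply: crt_reconstruct.
  - by rewrite filter_uniq ?iota_uniq.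
  - exact: lam_inv.
  - by move=> i _; apply: recon_share_eqmod; case/andP: l_bnd.
  - by apply: (sorted_pairwise_coprime _ _ _ mm_coprime L_sorted) => i /L_bnd /andP[].
  - rewrite y_ge0 (lt_le_trans y_lt) // lez_nat -add1n.
    exact: (leq_prod_iota_sorted _ n).
by rewrite YE; split=> //; exact: yval_modz.
Qed.
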